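(* Let $d\ge3$ and let $V:\mathbb{C}^{d^2-1}\to\mathbb{C}^d\otimes\mathbb{C}^d$ be any isometry whose range is orthogonal to $\ket{\phi_d^+}=\frac1{\sqrt d}\sum_{k=0}^{d-1}\ket{k}\otimes\ket{k}$ (equivalently, the range is the orthogonal complement of $\ket{\phi^+_d}$). Let $\mathcal{N}^V_{d^2-1}:\mathcal{L}(\mathbb{C}^{d^2-1})\to\mathcal{L}(\mathbb{C}^d)$ be $\mathcal{N}^V_{d^2-1}(\rho)=\operatorname{Tr}_E(V\rho V^\dagger)$ (trace over the second factor). Then $M_{k_d}\in\mathcal{P}^{(d^2-1)\to(d^2-1)}_{\min}(\mathcal{N}^V_{d^2-1},V)$, and consequently $\mathcal{P}^{(d^2-1)\to(d^2-1)}_{\min}(\mathcal{N}^V_{d^2-1},V)\not\subseteq\mathcal{P}^{(d^2-1)\to(d^2-1)}(\mathcal{Q}_{\tilde d})$ for every $\tilde d<d^2-1$; i.e. minimal environment assistance optimally unlocks the encoding strength of $\mathcal{N}^V_{d^2-1}$.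
   Context: $M_{k_d}=M_\Sigma\oplus\mathbb{I}_{d(d-1)}$, where $M_\Sigma$ is the $(d-1)\times(d-1)$ lower-triangular matrix with $(M_\Sigma)_{ij}=0$ for $j>i$, $(M_\Sigma)_{i1}=\frac2{i(i+1)}$, $(M_\Sigma)_{ij}=\frac1{i(i+1)}$ for $1<j<i$, and $(M_\Sigma)_{ii}=\frac{i}{i+1}$ for $i>1$. $\mathcal{P}^{n\to m}(\mathcal{Q}_d)$ is the set of $n\times m$ matrices $P_{ij}=\operatorname{Tr}[\Lambda_j\rho_i]$ with $\rho_i$ density matrices on $\mathbb{C}^d$ and $\{\Lambda_j\}$ a POVM on $\mathbb{C}^d$. For a channel $\mathcal{N}$ with isometry $V:\mathbb{C}^{d_A}\to\mathbb{C}^{d_B}\otimes\mathbb{C}^{d_E}$ (first factor receiver, second environment), $\mathcal{P}^{n\to m}_{\min}(\mathcal{N},V)$ is the set of $n\times m$ matrices $P_{ij}=\sum_{l,k}q(j\mid l,k)\operatorname{Tr}[(\Lambda^B_l\otimes\Lambda^E_k)V\rho_iV^\dagger]$, where $\rho_i$ are density matrices on $\mathbb{C}^{d_A}$, $\{\Lambda^B_l\}$, $\{\Lambda^E_k\}$ are finite-outcome POVMs on $\mathbb{C}^{d_B}$, $\mathbb{C}^{d_E}$ chosen independently, and $q(\cdot\mid l,k)$ is a probability distribution on $\{1,\dots,m\}$. *)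

From mathcomp Require Import all_boot all_order all_algebra.
From mathcomp Require Import spectral.
From mathcomp.real_closed Require Export mxtens.
From mathcomp Require Import zify.

Set Implicit Arguments.
Unset Strict Implicit.
Unset Printing Implicit Defensive.

Import Order.TTheory GRing.Theory Num.Theory.
Local Open Scope ring_scope.
Local Open Scope sesquilinear_scope.

Section QDefs.
Variable C : numClosedFieldType.

Definition adj {m n} (A : 'M[C]_(m, n)) : 'M[C]_(n, m) := A ^t*.

Definition psd {n} (A : 'M[C]_n) : Prop :=
  adj A = A /\ forall x : 'cV[C]_n, 0 <= (adj x *m A *m x) 0 0.

Definition density {n} (rho : 'M[C]_n) : Prop := psd rho /\ \tr rho = 1.

Definition povm {n L} (Lam : 'I_L -> 'M[C]_n) : Prop :=
  (forall l, psd (Lam l)) /\ \sum_(l < L) Lam l = 1%:M.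

(* isometry V : C^dA -> C^dB (x) C^dE, as a (dB*dE) x dA matrix *)
Definition is_isometry {p q} (V : 'M[C]_(p, q)) : Prop := adj V *m V = 1%:M.

Definition Pset (d n m : nat) (P : 'M[C]_(n, m)) : Prop :=
  exists (rho : 'I_n -> 'M[C]_d) (Lam : 'I_m -> 'M[C]_d),
    (forall i, density (rho i)) /\ povm Lam /\
    forall i j, P i j = \tr (Lam j *m rho i).

(* P^{n->m}_min(N, V), for the channel N = Tr_E(V . V^dagger); N is
   determined by V, so the set is parameterized by V. The first tensor
   factor (C^dB) is the receiver, the second (C^dE) the environment. *)
Definition Pmin (dA dB dE n m : nat) (V : 'M[C]_(dB * dE, dA))
    (P : 'M[C]_(n, m)) : Prop :=
  exists (rho : 'I_n -> 'M[C]_dA) (L K : nat)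
         (LamB : 'I_L -> 'M[C]_dB) (LamE : 'I_K -> 'M[C]_dE)
         (q : 'I_L -> 'I_K -> 'I_m -> C),
    (forall i, density (rho i)) /\ povm LamB /\ povm LamE /\
    (forall l k j, 0 <= q l k j) /\
    (forall l k, \sum_(j < m) q l k j = 1) /\
    forall i j, P i j =
      \sum_(l < L) \sum_(k < K)
         q l k j * \tr ((LamB l *t LamE k) *m (V *m rho i *m adj V)).

Definition phiplus (d : nat) : 'cV[C]_(d * d) :=
  (sqrtC d%:R)^-1 *: \sum_(k < d) (((delta_mx k 0 : 'cV[C]_d) *t (delta_mx k 0 : 'cV[C]_d)) : 'cV[C]_(d * d)).

(* M_Sigma : (d-1) x (d-1), indices 1-based in the paper *)
Definition MSigma (d : nat) : 'M[C]_(d.-1) :=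
  \matrix_(i, j)
    (let a := (i.+1)%N in let b := (j.+1)%N in
     if (a < b)%N then 0
     else if b == 1%N then 2%:R / (a * a.+1)%:R
     else if a == b then a%:R / a.+1%:R
     else 1 / (a * a.+1)%:R).

End QDefs.

Lemma Mkd_dim (d : nat) : (d.-1 + d * d.-1 = d ^ 2 - 1)%N.
Proof. case: d => [|d] //=; rewrite expnS expn1 /=; lia. Qed.

Definition Mkd (C : numClosedFieldType) (d : nat) : 'M[C]_(d ^ 2 - 1) :=
  castmx (Mkd_dim d, Mkd_dim d)
    (block_mx (MSigma C d) 0 0 (1%:M : 'M[C]_(d * d.-1))).

(* Encoding: the d^2-1 messages are sent as V^dagger psi_s, where the psi_s are
   orthonormal vectors orthogonal to phi^+: the d-1 vectors
   (sum_(l <= a) |ll> - (a+1) |a+1,a+1>) / sqrt((a+1)(a+2)) and the d(d-1)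
   basis vectors |lk>, l <> k.  As V V^dagger is the projector onto the
   complement of phi^+, the joint output on receiver and environment is exactly
   psi_s psi_s^dagger.  Both parties measure in the computational basis and the
   outcome (l, k) is decoded as the label of |lk> if l <> k, and as max(l, 1)
   (1-based) if l = k; the resulting transition probabilities are M_{k_d}.
   Conversely M_{k_d} is lower triangular with nonzero diagonal, and such a
   matrix realised on C^n has size at most n: the i-th POVM element sees some
   vector that all later elements annihilate, and these vectors give an
   invertible triangular matrix factoring through C^n. *)

From mathcomp Require Import all_boot all_order all_algebra.
From mathcomp Require Import spectral.
From mathcomp Require Import ring.
Import Order.TTheory GRing.Theory Num.Theory.
Local Open Scope ring_scope.
Set Implicit Arguments.
Unset Strict Implicit.
Unset Printing Implicit Defensive.

Section Adjoint.
Variable C : numClosedFieldType.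

Lemma adjM m n p (A : 'M[C]_(m, n)) (B : 'M[C]_(n, p)) :
  adj (A *m B) = adj B *m adj A.
Proof. by rewrite /adj trmx_mul map_mxM. Qed.

Lemma adjK m n (A : 'M[C]_(m, n)) : adj (adj A) = A.
Proof. by rewrite /adj trmxCK. Qed.

Lemma adj0 m n : adj (0 : 'M[C]_(m, n)) = 0.
Proof. by rewrite /adj trmx0 map_mx0. Qed.

Lemma adj_delta m p (i : 'I_m) (j : 'I_p) :
  adj (delta_mx i j : 'M[C]_(m, p)) = delta_mx j i.
Proof. by apply/matrixP => a b; rewrite /adj !mxE rmorph_nat andbC. Qed.

Lemma adj_orth m n p (A : 'M[C]_(m, n)) (B : 'M[C]_(m, p)) :
  adj A *m B = 0 -> adj B *m A = 0.
Proof. by move=> AB0; rewrite -[A]adjK -adjM AB0 adj0. Qed.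

Lemma adj_mulmx_ge0 p (y : 'cV[C]_p) : 0 <= (adj y *m y) 0 0.
Proof.
rewrite mxE sumr_ge0 // => i _; rewrite !mxE mulrC -normCK; exact: exprn_ge0.
Qed.

End Adjoint.

Section Positive.
Variable C : numClosedFieldType.

Definition qform n (A : 'M[C]_n) (w : 'cV[C]_n) : C := (adj w *m A *m w) 0 0.

Lemma psd_qform_ge0 n (A : 'M[C]_n) w : psd A -> 0 <= qform A w.
Proof. by case=> _ /(_ w). Qed.

Lemma conj_mx_diag m n (P : 'M[C]_(m, n)) (A : 'M[C]_n) k :
  (P *m A *m adj P) k k = qform A (adj (row k P)).
Proof.
rewrite /qform /adj !mxE; apply: eq_bigr => j _; rewrite !mxE; congr (_ * _).
by apply: eq_bigr => a _; rewrite !mxE conjCK.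
Qed.

Lemma qform_diag n (D : 'rV[C]_n) (y : 'cV[C]_n) :
  qform (diag_mx D) y = \sum_k D 0 k * `|y k 0| ^+ 2.
Proof.
rewrite /qform mul_mx_diag !mxE; apply: eq_bigr => /= k _.
by rewrite (mxE _ _ 0 k) /adj !mxE normCK [_ * D 0 k]mulrC -mulrA [_^* * _]mulrC.
Qed.

Lemma psd_spectral n (A : 'M[C]_n) : psd A ->
  exists (P : 'M[C]_n) (D : 'rV[C]_n),
    [/\ P *m adj P = 1%:M, A = adj P *m diag_mx D *m P & forall k, 0 <= D 0 k].
Proof.
move=> [hermA qA].
have nA : A \is normalmx by apply/normalmxP; rewrite -/(adj A) hermA.
have eA := orthomx_spectralP nA.
set P := spectralmx A in eA *; set D := spectral_diag A in eA *.
have uP : P \is unitarymx by apply: spectral_unitarymx.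
have PP : P *m adj P = 1%:M by apply/unitarymxP.
rewrite invmx_unitary // in eA.
exists P, D; split => // k.
have diagA : P *m A *m adj P = diag_mx D.
  by rewrite eA /adj !mulmxA PP mul1mx -!mulmxA -/(adj P) PP mulmx1.
by move/matrixP: diagA => /(_ k k); rewrite conj_mx_diag mxE eqxx mulr1n => <-; exact: qA.
Qed.

Lemma mxtrace_mul_spectral n (L P : 'M[C]_n) D :
  \tr (L *m (adj P *m diag_mx D *m P)) = \sum_i qform L (adj (row i P)) * D 0 i.
Proof.
rewrite mulmxA mxtrace_mulC mulmxA mulmxA mul_mx_diag /mxtrace.
by apply: eq_bigr => /= i _; rewrite (mxE _ _ i i) -conj_mx_diag mulmxA.
Qed.

Lemma psd_qform_eq0 n (L : 'M[C]_n) w : psd L -> qform L w = 0 -> L *m w = 0.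
Proof.
move=> /psd_spectral [P [D [PP -> D_ge0]]].
rewrite /qform -!mulmxA mulmxA -adjM mulmxA -/(qform _ _) qform_diag => q0.
suff -> : diag_mx D *m (P *m w) = 0 by rewrite mulmx0.
apply/matrixP => i j; rewrite mul_diag_mx mxE [RHS]mxE (ord1 j).
have /eqP := psumr_eq0P (fun k _ => mulr_ge0 (D_ge0 k) (exprn_ge0 2 (normr_ge0 _)))
  q0 (i := i) isT.
by rewrite mulf_eq0 expf_eq0 /= normr_eq0 => /orP[] /eqP->; rewrite ?mul0r ?mulr0.
Qed.

Lemma povm_separating_vector m n (R : 'M[C]_n) (Lam : 'I_m -> 'M[C]_n) i0
    (S : pred 'I_m) :
  psd R -> (forall j, psd (Lam j)) -> \tr (Lam i0 *m R) != 0 ->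
  (forall j, S j -> \tr (Lam j *m R) = 0) ->
  exists x : 'cV[C]_n, Lam i0 *m x != 0 /\ forall j, S j -> Lam j *m x = 0.
Proof.
move=> /psd_spectral [P [D [_ -> D_ge0]]] psdLam.
rewrite mxtrace_mul_spectral => tr_i0 trS.
have [i Qi0] : exists i, qform (Lam i0) (adj (row i P)) * D 0 i != 0.
  apply/existsP; apply: contraNT tr_i0 => /existsPn Q0.
  by rewrite big1 // => i _; apply/eqP/negbNE/Q0.
exists (adj (row i P)); split.
  by apply: contraNneq Qi0 => L0; rewrite /qform -mulmxA L0 mulmx0 mxE mul0r.
move=> j /trS; rewrite mxtrace_mul_spectral => trj0.
have /eqP := psumr_eq0P
  (fun i _ => mulr_ge0 (psd_qform_ge0 (adj (row i P)) (psdLam j)) (D_ge0 i)) trj0 (i := i) isT.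
rewrite mulf_eq0 => /orP[/eqP Qj0 | /eqP Di0]; first exact: psd_qform_eq0.
by move: Qi0; rewrite Di0 mulr0 eqxx.
Qed.

Lemma Pset_trig_dim m n (P : 'M[C]_m) :
  (forall i j : 'I_m, (i < j)%N -> P i j = 0) -> (forall i, P i i != 0) ->
  Pset n P -> (m <= n)%N.
Proof.
move=> Ptrig Pdiag [rho [Lam [rho_dens [[psdLam _] PE]]]].
have sep : forall i : 'I_m, exists x : 'cV[C]_n,
    Lam i *m x != 0 /\ forall j : 'I_m, (i < j)%N -> Lam j *m x = 0.
  move=> i; apply: povm_separating_vector (rho_dens i).1 psdLam _ _.
    by rewrite -PE.
  by move=> j ij; rewrite -PE Ptrig.
have [x xP] := fin_all_exists sep.
have coord : forall i : 'I_m, exists b : 'I_n, (Lam i *m x i) b 0 != 0.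
  move=> i; apply/existsP; apply: contraNT (xP i).1 => /existsPn Lx0.
  by apply/eqP/matrixP => a c; rewrite ord1 [RHS]mxE; apply/eqP/negbNE/Lx0.
have [b bP] := fin_all_exists coord.
pose X : 'M[C]_(m, n) := \matrix_(i, a) x i a 0.
pose W : 'M[C]_(n, m) := \matrix_(a, j) Lam j (b j) a.
have XWE : forall i j, (X *m W) i j = (Lam j *m x i) (b j) 0.
  by move=> i j; rewrite !mxE; apply: eq_bigr => a _; rewrite !mxE mulrC.
have XW_unit : X *m W \in unitmx.
  rewrite unitmxE unitfE det_trig.
    by rewrite prodf_seq_neq0; apply/allP => i _ /=; rewrite XWE.
  apply/forallP => i; apply/forallP => j; apply/implyP => ij.
  by rewrite XWE (xP i).2 // mxE.
have /mulmx1_min_rank : invmx (X *m W) *m X *m W = 1%:M by rewrite -mulmxA mulVmx.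
by move/leq_trans; apply; exact: rank_leq_col.
Qed.

End Positive.

Section Isometry.
Variable C : numClosedFieldType.

(* [row_mx V phi] has orthonormal columns and is square, hence unitary. *)
Lemma isometry_proj_compl m n (mn : (m + 1)%N = n) (V : 'M[C]_(n, m))
    (phi : 'cV[C]_n) :
  adj V *m V = 1%:M -> adj phi *m V = 0 -> adj phi *m phi = 1%:M ->
  V *m adj V = 1%:M - phi *m adj phi.
Proof.
case: n / mn in V phi * => VV phiV phi1.
have Vphi := adj_orth phiV.
have Wunit : adj (row_mx V phi) *m row_mx V phi = 1%:M.
  rewrite /adj tr_row_mx map_col_mx -!/(adj _) mul_col_row VV Vphi phiV phi1.
  by rewrite -scalar_mx_block.
move: (mulmx1C Wunit).
by rewrite /adj tr_row_mx map_col_mx -!/(adj _) mul_row_col => <-; rewrite addrK.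
Qed.

Section EncodedState.
Variables (m n : nat) (V : 'M[C]_(n, m)) (phi psi : 'cV[C]_n).
Hypotheses (VV : V *m adj V = 1%:M - phi *m adj phi)
           (phi_psi : adj phi *m psi = 0) (psi1 : adj psi *m psi = 1%:M).

Let VV_psi : V *m adj V *m psi = psi.
Proof. by rewrite VV mulmxBl mul1mx -mulmxA phi_psi mulmx0 subr0. Qed.

Let psi_VV : adj psi *m (V *m adj V) = adj psi.
Proof. by rewrite VV mulmxBr mulmx1 mulmxA (adj_orth phi_psi) mul0mx subr0. Qed.

Lemma encoded_state_density : density (adj V *m (psi *m adj psi) *m V).
Proof.
have -> : adj V *m (psi *m adj psi) *m V = (adj V *m psi) *m (adj psi *m V).
  by rewrite !mulmxA.
split; last by rewrite mxtrace_mulC mulmxA -(mulmxA (adj psi)) psi_VV psi1 mxtrace1.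
split; first by rewrite !adjM !adjK !mulmxA.
move=> x; have -> : adj x *m (adj V *m psi *m (adj psi *m V)) *m x =
    adj (adj psi *m V *m x) *m (adj psi *m V *m x) by rewrite !adjM !adjK !mulmxA.
exact: adj_mulmx_ge0.
Qed.

Lemma encoded_state_output :
  V *m (adj V *m (psi *m adj psi) *m V) *m adj V = psi *m adj psi.
Proof. by rewrite !mulmxA VV_psi -!mulmxA psi_VV. Qed.

End EncodedState.

Lemma povm_delta n : povm (fun l : 'I_n => (delta_mx l l : 'M[C]_n)).
Proof.
split; last by rewrite [RHS]mx1_sum_delta.
move=> l; split; first exact: adj_delta.
move=> x; have -> : adj x *m delta_mx l l *m x =
    adj ((delta_mx 0 l : 'rV[C]_n) *m x) *m ((delta_mx 0 l : 'rV[C]_n) *m x).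
  by rewrite adjM adj_delta -(@mul_delta_mx _ _ 1 _ 0) !mulmxA.
exact: adj_mulmx_ge0.
Qed.

End Isometry.

Section TensorVectors.
Variable C : numClosedFieldType.

Definition tensvec m p (f : 'I_m -> 'I_p -> C) : 'cV[C]_(m * p) :=
  \col_r f (mxtens_unindex r).1 (mxtens_unindex r).2.

Lemma tensvecE m p f l k : @tensvec m p f (mxtens_index (l, k)) 0 = f l k.
Proof. by rewrite mxE mxtens_indexK. Qed.

Lemma sum_mxtens m p (F : 'I_(m * p) -> C) :
  \sum_r F r = \sum_l \sum_k F (mxtens_index (l, k)).
Proof.
rewrite pair_bigA /= (reindex (@mxtens_index m p)) /=; first by apply: eq_bigr => -[l k].
by exists (@mxtens_unindex m p) => x _; [exact: mxtens_indexK | exact: mxtens_unindexK].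
Qed.

Lemma dot_tensvec m p f g :
  (adj (@tensvec m p f) *m tensvec g) 0 0 = \sum_l \sum_k (f l k)^* * g l k.
Proof.
rewrite mxE sum_mxtens; apply: eq_bigr => l _; apply: eq_bigr => k _.
by rewrite /adj !mxE mxtens_indexK.
Qed.

Lemma phiplusE d : phiplus C d = tensvec (fun l k => (sqrtC d%:R)^-1 * (l == k)%:R).
Proof.
apply/matrixP => r j; rewrite ord1; case: (mxtens_indexP r) => l k.
rewrite tensvecE /phiplus mxE summxE; congr (_ * _).
have o1 (x : 'I_1) : (x == 0) = true by rewrite ord1.
rewrite (bigD1 l) //= big1 => [|k' k'l].
  by rewrite !mxE mxtens_indexK /= !o1 !andbT eqxx addr0 mul1r eq_sym.
by rewrite !mxE mxtens_indexK /= !o1 !andbT eq_sym (negbTE k'l) mul0r.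
Qed.

Lemma mxtrace_tens_delta_proj d (l k : 'I_d) (psi : 'cV[C]_(d * d)) :
  \tr ((delta_mx l l *t delta_mx k k) *m (psi *m adj psi)) =
  `|psi (mxtens_index (l, k)) 0| ^+ 2.
Proof.
set r := mxtens_index (l, k).
have -> : (delta_mx l l : 'M[C]_d) *t (delta_mx k k : 'M[C]_d) = delta_mx r r.
  apply/matrixP => i j; case: (mxtens_indexP i) => l1 k1.
  case: (mxtens_indexP j) => l2 k2; rewrite tensmxE !mxE.
  rewrite !(inj_eq (can_inj (@mxtens_indexK _ _))) !xpair_eqE.
  by case: (l1 == l); case: (l2 == l); case: (k1 == k); case: (k2 == k);
    rewrite ?mulr0 ?mul0r ?mulr1.
rewrite -(@mul_delta_mx _ _ 1 _ 0) -mulmxA mxtrace_mulC trace_mx11 -mulmxA -rowE.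
by rewrite mxE -colE !mxE big_ord1 !mxE normCK.
Qed.

Lemma sum_diag m (F : 'I_m -> 'I_m -> C) :
  (forall l k, l != k -> F l k = 0) -> \sum_l \sum_k F l k = \sum_l F l l.
Proof.
move=> F0; apply: eq_bigr => l _; rewrite (bigD1 l) //= big1 ?addr0 // => k kl.
by apply: F0; rewrite eq_sym.
Qed.

Lemma sum_delta_pair m p (l0 : 'I_m) (k0 : 'I_p) (G : 'I_m -> 'I_p -> C) :
  \sum_l \sum_k ((l == l0) && (k == k0))%:R * G l k = G l0 k0.
Proof.
rewrite (bigD1 l0) //= [X in _ + X]big1 => [|l ll0]; last first.
  by apply: big1 => k _; rewrite (negbTE ll0) mul0r.
rewrite addr0 (bigD1 k0) //= [X in _ + X]big1 => [|k kk0]; last first.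
  by rewrite (negbTE kk0) andbF mul0r.
by rewrite !eqxx mul1r addr0.
Qed.

Lemma sum_step N b (x y : C) : (b < N)%N ->
  \sum_(l < N) (if (l < b)%N then x else if l == b :> nat then y else 0) = b%:R * x + y.
Proof.
elim: N => // N IH; rewrite ltnS leq_eqVlt => /orP[/eqP eb | bN].
  rewrite big_ord_recr /= -eb ltnn eqxx; congr (_ + _).
  rewrite mulr_natl -[in RHS](card_ord b) -sumr_const; apply: eq_bigr => i _.
  by rewrite /= ltn_ord.
by rewrite big_ord_recr /= IH // (ltnNge N) (ltnW bN) /= (gtn_eqF bN) addr0.
Qed.

End TensorVectors.

Section Code.
Variables (C : numClosedFieldType) (n : nat).
Local Notation d := n.+2.
Local Notation S := 'I_(n.+1 + d * n.+1).

Definition diag_scale (a : 'I_n.+1) : C := (sqrtC (a.+1 * a.+2)%:R)^-1.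

Definition diag_amp (a : 'I_n.+1) (l : nat) : C :=
  if (l < a.+1)%N then diag_scale a
  else if l == a.+1 :> nat then - a.+1%:R * diag_scale a else 0.

Definition diag_code (a : 'I_n.+1) (l k : 'I_d) : C :=
  if l == k then diag_amp a l else 0.

(* [|l, lift l m>] enumerates the off-diagonal basis vectors [|l, k>], [l != k]. *)
Definition offdiag_code (p : 'I_(d * n.+1)) (l k : 'I_d) : C :=
  let: (l0, m0) := mxtens_unindex p in ((l == l0) && (k == lift l0 m0))%:R.

Definition code (s : S) : 'I_d -> 'I_d -> C :=
  match split s with inl a => diag_code a | inr p => offdiag_code p end.

Definition diag_decode (l : 'I_d) : 'I_n.+1 := inord l.-1.

Definition decode (l k : 'I_d) : S :=
  if l == k then lshift _ (diag_decode l)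
  else rshift _ (mxtens_index (l, odflt ord0 (unlift l k))).

Lemma invsqrtC_nat_real k : (sqrtC k%:R : C)^-1 \is Num.real.
Proof. by rewrite rpredV sqrtC_real ?ler0n. Qed.

Lemma diag_scale_real a : diag_scale a \is Num.real.
Proof. exact: invsqrtC_nat_real. Qed.

Lemma diag_amp_real a l : diag_amp a l \is Num.real.
Proof.
rewrite /diag_amp; case: ifP => _; first exact: diag_scale_real.
by case: ifP => _ //; rewrite rpredM ?rpredN ?diag_scale_real ?realn.
Qed.

Lemma diag_scale_sqr a : diag_scale a * diag_scale a = ((a.+1 * a.+2)%:R)^-1.
Proof. by rewrite /diag_scale -invfM -expr2 sqrtCK. Qed.

Lemma offdiag_codeE l0 m0 l k :
  offdiag_code (mxtens_index (l0, m0)) l k = ((l == l0) && (k == lift l0 m0))%:R.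
Proof. by rewrite /offdiag_code mxtens_indexK. Qed.

Lemma diag_decodeE l : diag_decode l = l.-1 :> nat.
Proof. by rewrite /diag_decode inordK //; case: l => [[|l]] //= /ltnW. Qed.

Lemma phiplus_norm : adj (phiplus C d) *m phiplus C d = 1%:M.
Proof.
rewrite [LHS]mx11_scalar phiplusE dot_tensvec; congr (_%:M).
rewrite sum_diag => [|l k lk]; last by rewrite (negbTE lk) !mulr0.
under eq_bigr do rewrite eqxx mulr1 conj_Creal ?invsqrtC_nat_real // -invfM -expr2 sqrtCK.
by rewrite sumr_const card_ord -[RHS](@mulVf _ d%:R) ?pnatr_eq0 // mulr_natr.
Qed.

Lemma diag_code_norm a : adj (tensvec (diag_code a)) *m tensvec (diag_code a) = 1%:M.
Proof.
rewrite [LHS]mx11_scalar dot_tensvec; congr (_%:M).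
rewrite sum_diag => [|l k lk]; last by rewrite /diag_code (negbTE lk) mulr0.
rewrite /diag_code; under eq_bigr do rewrite eqxx conj_Creal ?diag_amp_real //.
have -> : \sum_(l < d) diag_amp a l * diag_amp a l = \sum_(l < d)
    (if (l < a.+1)%N then diag_scale a * diag_scale a
     else if l == a.+1 :> nat then a.+1%:R ^+ 2 * (diag_scale a * diag_scale a)
     else 0).
  apply: eq_bigr => l _; rewrite /diag_amp; case: ifP => // _.
  by case: ifP => _; rewrite ?mul0r // mulNr mulrNN mulrACA expr2.
rewrite sum_step; last by rewrite ltnS.
rewrite diag_scale_sqr -mulrDl -natrX -natrD.
have -> : (a.+1 + a.+1 ^ 2 = a.+1 * a.+2)%N by rewrite expnS expn1 [RHS]mulnS.
by rewrite mulfV // pnatr_eq0.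
Qed.

Lemma diag_code_orth a : adj (phiplus C d) *m tensvec (diag_code a) = 0.
Proof.
rewrite [LHS]mx11_scalar phiplusE dot_tensvec.
rewrite sum_diag => [|l k lk]; last by rewrite /diag_code (negbTE lk) mulr0.
rewrite /diag_code.
under eq_bigr do rewrite eqxx mulr1 conj_Creal ?invsqrtC_nat_real //.
rewrite -mulr_sumr /diag_amp sum_step; last by rewrite ltnS.
by rewrite mulNr addrN mulr0 raddf0.
Qed.

Lemma offdiag_code_norm p :
  adj (tensvec (offdiag_code p)) *m tensvec (offdiag_code p) = 1%:M.
Proof.
rewrite [LHS]mx11_scalar dot_tensvec; congr (_%:M).
case: (mxtens_indexP p) => l0 m0.
under eq_bigr do under eq_bigr do rewrite offdiag_codeE rmorph_nat.
by rewrite sum_delta_pair !eqxx.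
Qed.

Lemma offdiag_code_orth p : adj (phiplus C d) *m tensvec (offdiag_code p) = 0.
Proof.
rewrite [LHS]mx11_scalar phiplusE dot_tensvec.
case: (mxtens_indexP p) => l0 m0.
under eq_bigr do under eq_bigr do rewrite offdiag_codeE mulrC.
by rewrite sum_delta_pair (negbTE (neq_lift l0 m0)) mulr0 rmorph0 raddf0.
Qed.

Lemma code_norm s : adj (tensvec (code s)) *m tensvec (code s) = 1%:M.
Proof. by rewrite /code; case: split => [a|p]; [exact: diag_code_norm | exact: offdiag_code_norm]. Qed.

Lemma code_orth s : adj (phiplus C d) *m tensvec (code s) = 0.
Proof. by rewrite /code; case: split => [a|p]; [exact: diag_code_orth | exact: offdiag_code_orth]. Qed.


Lemma sum_diag_decode (b : 'I_n.+1) (F : nat -> C) :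
  \sum_(l < d) (diag_decode l == b)%:R * F l =
  if b == 0 :> nat then F 0%N + F 1%N else F b.+1.
Proof.
under eq_bigr do rewrite -val_eqE /= diag_decodeE.
rewrite 2!big_ord_recl /=.
case: b => [[|b] /= lt_bn].
  by rewrite !mul1r big1 ?addr0 // => i _; rewrite mul0r.
rewrite !mul0r !add0r (bigD1 (Ordinal (lt_bn : (b < n)%N))) //= eqxx mul1r big1 ?addr0 // => i ib.
by move: ib; rewrite -val_eqE /bump !leq0n !add1n eqSS => /negbTE ->; rewrite mul0r.
Qed.

Lemma sum_diag_decode_amp (a b : 'I_n.+1) :
  \sum_(l < d) (diag_decode l == b)%:R * `|diag_amp a l| ^+ 2 = MSigma C d a b.
Proof.
rewrite (sum_diag_decode b (fun l => `|diag_amp a l| ^+ 2)) /MSigma mxE !real_normK ?diag_amp_real // /diag_amp /=.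
have c2 : diag_scale a ^+ 2 = ((a.+1 * a.+2)%:R)^-1 by rewrite expr2 diag_scale_sqr.
case: b => [[|b] /= _].
  case: a c2 => [[|a] ha] c2 /=;
    by rewrite ?mulr1n ?mulN1r ?sqrrN c2 -mulr2n mulr_natl.
case: (ltngtP a.+1 b.+2) => _; rewrite ?expr0n //.
  by rewrite c2 div1r.
rewrite exprMn sqrrN c2 !natrM.
by field; rewrite -!natrD [1 + _]addrC natr1 !pnatr_eq0.
Qed.


Lemma sqr_norm_nat (b : bool) : `|(b%:R : C)| ^+ 2 = b%:R.
Proof. by case: b; rewrite ?normr1 ?normr0 expr2 ?mulr1 ?mulr0. Qed.

Lemma sum_decode_code (s j : S) :
  \sum_l \sum_k (decode l k == j)%:R * `|code s l k| ^+ 2 =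
  block_mx (MSigma C d) 0 0 (1%:M : 'M[C]_(d * n.+1)) s j.
Proof.
case: (split_ordP s) => [a -> | p ->]; rewrite /code ?(unsplitK (inl _)) ?(unsplitK (inr _)).
  rewrite sum_diag => [|l k lk]; last by rewrite /diag_code (negbTE lk) normr0 expr2 !mulr0.
  under eq_bigr do rewrite /diag_code /decode !eqxx.
  case: (split_ordP j) => [b -> | p' ->].
    by under eq_bigr do rewrite eq_lshift; rewrite block_mxEul sum_diag_decode_amp.
  under eq_bigr do rewrite eq_lrshift mul0r.
  by rewrite big1 // block_mxEur mxE.
case: (mxtens_indexP p) => l0 m0.
under eq_bigr do under eq_bigr do rewrite offdiag_codeE sqr_norm_nat mulrC.
rewrite sum_delta_pair /decode (negbTE (neq_lift l0 m0)) liftK /=.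
case: (split_ordP j) => [b -> | p' ->].
  by rewrite eq_rlshift block_mxEdl mxE.
by rewrite eq_rshift block_mxEdr mxE.
Qed.

Lemma Mkd_block (i j : 'I_(d ^ 2 - 1)) :
  Mkd C d i j = block_mx (MSigma C d) 0 0 (1%:M : 'M[C]_(d * n.+1))
     (cast_ord (esym (Mkd_dim d)) i) (cast_ord (esym (Mkd_dim d)) j).
Proof. by rewrite /Mkd castmxE. Qed.

Lemma Mkd_trig (i j : 'I_(d ^ 2 - 1)) : (i < j)%N -> Mkd C d i j = 0.
Proof.
rewrite Mkd_block.
have <- : (cast_ord (esym (Mkd_dim d)) i : nat) = i by [].
have <- : (cast_ord (esym (Mkd_dim d)) j : nat) = j by [].
set i' := cast_ord _ i; set j' := cast_ord _ j.
case: (split_ordP i') => [a -> | p ->]; case: (split_ordP j') => [b -> | q ->] /= ij.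
- by rewrite block_mxEul mxE /= ltnS ij.
- by rewrite block_mxEur mxE.
- by move: ij; rewrite ltnNge (leq_trans (ltnW (ltn_ord b)) (leq_addr _ _)).
- rewrite ltn_add2l in ij.
  by rewrite block_mxEdr mxE -val_eqE /= ltn_eqF.
Qed.

Lemma Mkd_diag_neq0 (i : 'I_(d ^ 2 - 1)) : Mkd C d i i != 0.
Proof.
rewrite Mkd_block; set i' := cast_ord _ i.
case: (split_ordP i') => [a -> | p ->].
  rewrite block_mxEul mxE /= ltnn eqxx.
  by case: ifP => _; apply: mulf_neq0; rewrite ?invr_eq0 ?pnatr_eq0.
by rewrite block_mxEdr mxE eqxx oner_eq0.
Qed.


Lemma Mkd_Pmin (V : 'M[C]_(d * d, d ^ 2 - 1)) :
  is_isometry V -> adj (phiplus C d) *m V = 0 ->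
  @Pmin C (d ^ 2 - 1) d d (d ^ 2 - 1) (d ^ 2 - 1) V (Mkd C d).
Proof.
move=> isoV phiV.
have dim : (d ^ 2 - 1 + 1 = d * d)%N by rewrite subnK ?expn_gt0 // mulnn.
have VV := isometry_proj_compl dim isoV phiV phiplus_norm.
pose cst i := cast_ord (esym (Mkd_dim d)) i.
pose psi i := tensvec (code (cst i)).
exists (fun i => adj V *m (psi i *m adj (psi i)) *m V), d, d,
  (fun l => delta_mx l l), (fun k => delta_mx k k),
  (fun l k j => (decode l k == cst j)%:R).
split=> [i|]; first exact: encoded_state_density VV (code_orth _) (code_norm _).
split; first exact: povm_delta.
split; first exact: povm_delta.
split=> [l k j|]; first by rewrite ler0n.
split=> [l k | i j].
  have decodeK : cst (cast_ord (Mkd_dim d) (decode l k)) = decode l k by apply: val_inj.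
  rewrite (bigD1 (cast_ord (Mkd_dim d) (decode l k))) //= decodeK eqxx big1 ?addr0 // => j.
  by apply: contraNeq; rewrite pnatr_eq0 eqb0 negbK => /eqP->; apply/eqP/val_inj.
rewrite (encoded_state_output VV (code_orth _)) Mkd_block -sum_decode_code.
apply: eq_bigr => l _; apply: eq_bigr => k _.
by rewrite mxtrace_tens_delta_proj tensvecE.
Qed.

End Code.

Theorem theorem3 (C : numClosedFieldType) (d : nat) (hd : (3 <= d)%N)
    (V : 'M[C]_(d * d, d ^ 2 - 1)) :
  is_isometry V ->
  adj (phiplus C d) *m V = 0 ->
  @Pmin C (d ^ 2 - 1) d d (d ^ 2 - 1) (d ^ 2 - 1) V (Mkd C d) /\
  forall dt : nat, (dt < d ^ 2 - 1)%N ->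
    ~ (forall P : 'M[C]_(d ^ 2 - 1, d ^ 2 - 1),
         @Pmin C (d ^ 2 - 1) d d (d ^ 2 - 1) (d ^ 2 - 1) V P -> Pset dt P).
Proof.
case: d hd V => [|[|n]] // _ V isoV phiV.
have MkdP := Mkd_Pmin isoV phiV.
split=> // dt lt_dt PminP.
have := Pset_trig_dim (@Mkd_trig C n) (@Mkd_diag_neq0 C n) (PminP _ MkdP).
by rewrite leqNgt lt_dt.
Qed.
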